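(* Let $p\in(0,1)$, let $(a_j)_{j\ge1}$ be positive rational numbers with $\sum_{j=1}^\infty a_j=p$, and let $\epsilon:\mathbb N\to\mathbb R$ be a monotonically non-increasing function with $\lim_{N\to\infty}\epsilon(N)=0$ and $p-\sum_{j=1}^N a_j\le \epsilon(N)$ for every $N\in\mathbb N$. Let $X_1,X_2,\dots$ be independent Bernoulli random variables with parameter $1/2$, and run the algorithm described in the context on these data. Then: (1) the algorithm terminates with probability $1$; (2) its output $Y$ is a Bernoulli random variable with parameter $p$, i.e. $\Pr[Y=1]=p$; (3) if each term $a_j$ and each value $\epsilon(N)$ can be computed with a finite number of operations involving rational numbers, then the algorithm can be implemented using rational arithmetic only.
   Context: The algorithm (with inputs $(a_j)$, $\epsilon$, and the coins $X_1,X_2,\dots$) is as follows. Initialise $N\leftarrow0$, $S\leftarrow0$, $E\leftarrow1$, $A\leftarrow0$, $s\leftarrow0$, $k\leftarrow0$. Repeat the following iteration: set $k\leftarrow k+1$ and $A\leftarrow A+s\cdot2^{-k}$; then, while none of the three conditions (i) $S+E\le A+2^{-k}$, (ii) $S>A+2^{-k}$, (iii) $S>A+\tfrac12 2^{-k}$ and $S+E\le A+\tfrac32 2^{-k}$ holds, do $N\leftarrow N+1$, $S\leftarrow S+a_N$, $E\leftarrow\epsilon(N)$; after this inner loop, set $s\leftarrow0$ if (i) holds, else $s\leftarrow2$ if (ii) holds, else $s\leftarrow1$. The iteration is repeated until $X_k=0$ (the coin $X_k$ is read at the end of iteration $k$). After the last iteration, output $Y=0$ if $s=0$, $Y=1$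 if $s=2$, and $Y=X_{k+1}$ if $s=1$. *)

From HB Require Import structures.
From mathcomp Require Import all_boot all_order all_algebra.
From mathcomp Require Import all_classical all_reals all_analysis.
Set Implicit Arguments. Unset Strict Implicit. Unset Printing Implicit Defensive.
Import Order.TTheory GRing.Theory Num.Theory.
Import numFieldNormedType.Exports.
Local Open Scope ring_scope.

(** The algorithm of the paper, written generically over an ordered field F
    (so that it can be run over the reals or over the rationals).
    Inputs: a : nat -> F (a j = a_j, only j >= 1 used),
            eps : nat -> F (only eps N, N >= 1, used),
            c : nat -> bool (c k = X_k, true means X_k = 1; only k >= 1 used). *)

Record alg_state (F : Type) := AlgState {
  stN : nat;
  stS : F;
  stE : F;
  stA : F;
  sts : nat;      (* s in {0,1,2} *)
  stk : nat;
  st_inner : bool (* false: at the start of an outer iteration;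
                     true: inside the inner while loop of iteration k *)
}.

Definition alg_init (F : realFieldType) : alg_state F :=
  AlgState 0 0 1 0 0 0 false.

(** One elementary step: either a new state (inl) or termination with
    output Y (inr Y, true meaning Y = 1). *)
Definition alg_step (F : realFieldType) (a eps : nat -> F) (c : nat -> bool)
    (x : alg_state F) : alg_state F + bool :=
  let: AlgState N S0 E A s k inner := x in
  if ~~ inner then
    inl (AlgState N S0 E (A + s%:R * (2%:R ^- k.+1)) s k.+1 true)
  else
    let h := (2%:R : F) ^- k in
    let c1 := S0 + E <= A + h in
    let c2 := A + h < S0 in
    let c3 := (A + h / 2%:R < S0) && (S0 + E <= A + 3%:R / 2%:R * h) in
    if [|| c1, c2 | c3] then
      let s' := if c1 then 0%N else if c2 then 2%N else 1%N in
      if c k then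
        inl (AlgState N S0 E A s' k false)
      else
        inr (if s' == 0%N then false else if s' == 2%N then true else c k.+1)
    else
      inl (AlgState N.+1 (S0 + a N.+1) (eps N.+1) A s k true).

(** Run for at most [fuel] elementary steps; [None] = not (yet) terminated. *)
Fixpoint alg_run_from (F : realFieldType) (a eps : nat -> F) (c : nat -> bool)
    (fuel : nat) (x : alg_state F) : option bool :=
  match fuel with
  | 0 => None
  | n.+1 =>
      match alg_step a eps c x with
      | inl y => alg_run_from a eps c n y
      | inr b => Some b
      end
  end.

Definition alg_run (F : realFieldType) (a eps : nat -> F) (c : nat -> bool)
    (fuel : nat) : option bool :=
  alg_run_from a eps c fuel (alg_init F).

Section Prob.
Local Open Scope classical_set_scope.
Context (d : measure_display) (T : measurableType d) (R : realType).

Definition fair_bernoulli (P : probability T R) (X : nat -> T -> bool) : Prop :=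
  forall k, (0 < k)%N ->
    measurable [set w | X k w = true] /\
    P [set w | X k w = true] = (2%:R^-1 : R)%:E.

Definition mutually_independent (P : probability T R) (X : nat -> T -> bool) : Prop :=
  forall (s : seq nat) (b : nat -> bool), uniq s -> all (fun i => 0 < i)%N s ->
    P [set w | forall i, i \in s -> X i w = b i] =
    (\prod_(i <- s) P [set w | X i w = b i])%E.

Definition alg_terminates (a eps : nat -> R) (X : nat -> T -> bool) : set T :=
  [set w | exists n, alg_run a eps (fun k => X k w) n != None].

Definition alg_outputs_one (a eps : nat -> R) (X : nat -> T -> bool) : set T :=
  [set w | exists n, alg_run a eps (fun k => X k w) n = Some true].
End Prob.

From HB Require Import structures.
From mathcomp Require Import all_boot all_order all_algebra.
From mathcomp Require Import all_classical all_reals all_analysis.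
From mathcomp Require Import lra.
Set Implicit Arguments. Unset Strict Implicit. Unset Printing Implicit Defensive.
Import Order.TTheory GRing.Theory Num.Theory.
Import numFieldNormedType.Exports.
Local Open Scope ring_scope.
Local Open Scope classical_set_scope.

(** While the coins show heads, the outer iterations maintain the invariant
    [A < p <= A + 2^(1-k)] in iteration [k]: the inner loop reads terms until
    the interval [(S, S + E]], which contains [p] and shrinks to it, lies in one
    of the windows [(A, A + h]], [(A + h, A + 2h]], [(A + h/2, A + 3h/2]] (with
    [h = 2^-k]), and [s] records the window, halving the uncertainty.
    The run stops at the first tail [X_(K+1) = 0], which has probability
    [2^-(K+1)]; it then outputs 1 with probability [s_(K+1) / 2].  Hence
    [Pr[Y = 1] = sum_K s_(K+1) 2^-(K+2) = sum_K (A_(K+2) - A_(K+1)) = lim A_k = p].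
    Over the rationals the algorithm makes the same comparisons, since the
    embedding of [rat] preserves and reflects the order. *)

Section Execution.
Variables (F : realFieldType) (a eps : nat -> F) (c : nat -> bool).

Fixpoint run_steps (m : nat) (x : alg_state F) : option (alg_state F) :=
  if m is m'.+1 then
    if alg_step a eps c x is inl y then run_steps m' y else None
  else Some x.

Lemma alg_run_fromS n x : alg_run_from a eps c n.+1 x =
  match alg_step a eps c x with
  | inl y => alg_run_from a eps c n y
  | inr b => Some b
  end.
Proof. by []. Qed.

Lemma run_stepsS m x : run_steps m.+1 x =
  if alg_step a eps c x is inl y then run_steps m y else None.
Proof. by []. Qed.

Lemma run_stepsD m1 m2 x y :
  run_steps m1 x = Some y -> run_steps (m1 + m2) x = run_steps m2 y.
Proof.
elim: m1 x => [|m IH] x /=; first by case=> ->.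
by case: alg_step => // z; apply: IH.
Qed.

Lemma alg_run_from_steps m n x y : run_steps m x = Some y ->
  alg_run_from a eps c (m + n) x = alg_run_from a eps c n y.
Proof.
elim: m x => [|m IH] x /=; first by case=> ->.
by case: alg_step => // z; apply: IH.
Qed.

Lemma alg_run_from_steps_None m n x y : run_steps m x = Some y -> (n <= m)%N ->
  alg_run_from a eps c n x = None.
Proof.
elim: m n x => [|m IH] [|n] x //=.
by case: alg_step => // z; apply: IH.
Qed.

Lemma alg_run_fromD n m x b : alg_run_from a eps c n x = Some b ->
  alg_run_from a eps c (n + m) x = Some b.
Proof.
elim: n x => [|n IH] x //=.
by case: alg_step => // z; apply: IH.
Qed.

Lemma alg_run_from_uniq n m x b b' : alg_run_from a eps c n x = Some b ->
  alg_run_from a eps c m x = Some b' -> b = b'.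
Proof.
move=> /(alg_run_fromD m) Hn /(alg_run_fromD n).
by rewrite addnC Hn => -[].
Qed.

End Execution.

Section RationalArithmetic.
Variables (R : realFieldType) (a e : nat -> rat) (eps : nat -> R) (c : nat -> bool).
Hypothesis eps_ratr : forall N, (0 < N)%N -> eps N = ratr (e N).

Definition ratr_state (x : alg_state rat) : alg_state R :=
  AlgState (stN x) (ratr (stS x)) (ratr (stE x)) (ratr (stA x)) (sts x) (stk x)
    (st_inner x).

Lemma alg_step_ratr x : alg_step (fun j => ratr (a j)) eps c (ratr_state x) =
  match alg_step a e c x with inl y => inl (ratr_state y) | inr b => inr b end.
Proof.
case: x => N S E A s k [|] /=; last first.
  by rewrite /ratr_state /= rmorphD rmorphM fmorphV rmorphXn !rmorph_nat.
have ratr_h : ratr (2%:R ^- k) = 2%:R ^- k :> R.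
  by rewrite fmorphV rmorphXn rmorph_nat.
have ratr_h2 : ratr (2%:R ^- k / 2%:R) = 2%:R ^- k / 2%:R :> R.
  by rewrite fmorph_div fmorphV rmorphXn !rmorph_nat.
have ratr_3h2 : ratr (3%:R / 2%:R * 2%:R ^- k) = 3%:R / 2%:R * 2%:R ^- k :> R.
  by rewrite rmorphM fmorph_div fmorphV rmorphXn !rmorph_nat.
rewrite -ratr_h2 -ratr_3h2 -ratr_h -!rmorphD !ler_rat !ltr_rat.
case: ifP => _; first by case: (c k).
by rewrite /ratr_state /= rmorphD eps_ratr.
Qed.

Lemma alg_run_ratr n : alg_run (fun j => ratr (a j)) eps c n = alg_run a e c n.
Proof.
rewrite /alg_run.
have -> : alg_init R = ratr_state (alg_init rat).
  by rewrite /ratr_state /= rmorph0 rmorph1.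
elim: n (alg_init rat) => [|n IH] x //.
by rewrite !alg_run_fromS alg_step_ratr; case: alg_step.
Qed.

End RationalArithmetic.

Definition output (s : nat) (b : bool) : bool :=
  if s == 0%N then false else if s == 2%N then true else b.

Definition dyad {R : unitRingType} (k : nat) : R := 2%:R ^- k.

Lemma dyad_gt0 (R : numFieldType) k : 0 < dyad k :> R.
Proof. by rewrite invr_gt0 exprn_gt0. Qed.

Lemma dyadS (R : numFieldType) k : dyad k.+1 = 2%:R^-1 * dyad k :> R.
Proof. by rewrite /dyad exprS invfM. Qed.

Lemma dyad_cvg0 (R : realType) : dyad n @[n --> \oo] --> (0 : R).
Proof.
have -> : dyad = GRing.exp (2%:R^-1 : R) by apply/funext => n; rewrite /dyad exprVn.
by apply: cvg_expr; rewrite ger0_norm ?invr_ge0 ?ler0n // invf_lt1 ?ltr1n.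
Qed.

Lemma measure_bigcup_telescope d (T : measurableType d) (R : realType)
    (mu : {measure set T -> \bar R}) (G : nat -> set T) (v : nat -> R) (l : R) :
  (forall n, measurable (G n)) -> trivIset setT G ->
  (forall n, mu (G n) = (v n.+1 - v n)%:E) -> v n @[n --> \oo] --> l ->
  mu (\bigcup_n G n) = (l - v 0%N)%:E.
Proof.
move=> mG tG muG vl.
have partial_sumsE :
    (fun n => \sum_(0 <= i < n) mu (G i))%E = (fun n => (v n - v 0%N)%:E).
  apply/funext => n; rewrite (eq_bigr _ (fun i _ => muG i)) sumEFin.
  by rewrite telescope_sumr.
have := measure_sigma_additive (mu := mu) mG tG; rewrite partial_sumsE => sums_cvg.
apply: (cvg_unique (@ereal_hausdorff R) sums_cvg).
by apply: cvg_EFin; [near=> n | apply: cvgB => //; exact: cvg_cst].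
Unshelve. all: by end_near.
Qed.

Section FairCoins.
Context (d : measure_display) (T : measurableType d) (R : realType)
  (P : probability T R) (X : nat -> T -> bool).
Hypotheses (X_fair : fair_bernoulli P X) (X_indep : mutually_independent P X).

Lemma coin_falseE i : [set w | X i w = false] = ~` [set w | X i w = true].
Proof. by apply/seteqP; split => w /=; case: (X i w). Qed.

Lemma measurable_coin i b : (0 < i)%N -> measurable [set w | X i w = b].
Proof.
move=> i_gt0; have [mX _] := X_fair i_gt0.
by case: b => //; rewrite coin_falseE; exact: measurableC.
Qed.

Lemma prob_coin i b : (0 < i)%N -> P [set w | X i w = b] = (2%:R^-1 : R)%:E.
Proof.
move=> i_gt0; have [mX PX] := X_fair i_gt0.
case: b => //; rewrite coin_falseE probability_setC // PX -EFinB.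
by rewrite {1}(splitr 1) mul1r addrK.
Qed.

Definition coin_event (s : seq nat) (b : nat -> bool) : set T :=
  [set w | forall i, i \in s -> X i w = b i].

Lemma measurable_coin_event s b : all (fun i => 0 < i)%N s ->
  measurable (coin_event s b).
Proof.
elim: s => [_|i s IH /andP[i_gt0 s_gt0]].
  by rewrite [coin_event _ _](_ : _ = setT) //; apply/seteqP; split.
rewrite [coin_event _ _](_ : _ = [set w | X i w = b i] `&` coin_event s b).
  by apply: measurableI; [exact: measurable_coin | exact: IH].
apply/seteqP; split => w /=.
  by move=> H; split=> [|j js]; apply: H; rewrite inE ?eqxx ?js ?orbT.
by case=> Hi Hs j; rewrite inE => /orP[/eqP -> //|]; exact: Hs.
Qed.

Lemma prob_coin_event s b : uniq s -> all (fun i => 0 < i)%N s ->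
  P (coin_event s b) = (dyad (size s))%:E.
Proof.
move=> s_uniq s_gt0; rewrite (X_indep b s_uniq s_gt0) /dyad -exprVn.
elim: s {s_uniq} s_gt0 => [|i s IH /andP[i_gt0 s_gt0]]; first by rewrite big_nil.
by rewrite big_cons prob_coin // IH // exprS EFinM.
Qed.

Lemma coin_event_iotaS n b w :
  coin_event (iota 1 n.+1) b w <-> coin_event (iota 1 n) b w /\ X n.+1 w = b n.+1.
Proof.
have -> : iota 1 n.+1 = iota 1 n ++ [:: n.+1].
  by rewrite -[n.+1]addn1 iotaD add1n addn1.
rewrite /coin_event /=; split.
  move=> H; split=> [i i_in|]; apply: H; first by rewrite mem_cat i_in.
  by rewrite mem_cat mem_seq1 eqxx orbT.
by case=> H Hn i; rewrite mem_cat mem_seq1 => /orP[/H //|/eqP ->].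
Qed.

Definition first_tail K := coin_event (iota 1 K.+1) (fun i => i != K.+1).

Definition first_tail_then_head K := coin_event (iota 1 K.+2) (fun i => i != K.+1).

Lemma first_tailP K w :
  first_tail K w <-> (forall i, (0 < i <= K)%N -> X i w) /\ X K.+1 w = false.
Proof.
have headsP : coin_event (iota 1 K) (fun i => i != K.+1) w <->
    forall i, (0 < i <= K)%N -> X i w.
  split=> H i; rewrite ?mem_iota ?add1n ?ltnS => iK.
    by rewrite H ?mem_iota ?add1n ?ltnS // neq_ltn ltnS (andP iK).2.
  by rewrite H // neq_ltn ltnS (andP iK).2.
rewrite /first_tail coin_event_iotaS eqxx.
by split=> -[heads tail]; split=> //; apply/headsP.
Qed.

Lemma first_tail_then_headP K w :
  first_tail_then_head K w <-> first_tail K w /\ X K.+2 w.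
Proof. by rewrite /first_tail_then_head coin_event_iotaS eqSS neq_ltn ltnSn orbT. Qed.

Lemma iota1_gt0 n : all (fun i => 0 < i)%N (iota 1 n).
Proof. by apply/allP => i; rewrite mem_iota => /andP[]. Qed.

Lemma measurable_first_tail K : measurable (first_tail K).
Proof. exact/measurable_coin_event/iota1_gt0. Qed.

Lemma measurable_first_tail_then_head K : measurable (first_tail_then_head K).
Proof. exact/measurable_coin_event/iota1_gt0. Qed.

Lemma prob_first_tail K : P (first_tail K) = (dyad K.+1)%:E.
Proof. by rewrite prob_coin_event ?iota_uniq ?iota1_gt0 // size_iota. Qed.

Lemma prob_first_tail_then_head K : P (first_tail_then_head K) = (dyad K.+2)%:E.
Proof. by rewrite prob_coin_event ?iota_uniq ?iota1_gt0 // size_iota. Qed.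

Lemma trivIset_first_tail : trivIset setT first_tail.
Proof.
apply: ltn_trivIset => K n Kn; apply/seteqP; split => // w [].
by move=> /first_tailP[_ tail] /first_tailP[heads _]; rewrite heads in tail.
Qed.

End FairCoins.

Section Analysis.
Variables (R : realType) (p : R) (a eps : nat -> R).

(* The contents of the registers [S] and [E] once [N] terms have been read. *)
Definition psum N := \sum_(1 <= j < N.+1) a j.

Definition err N := if N is 0 then 1 else eps N.

Hypotheses (p01 : 0 < p < 1) (a_gt0 : forall j, (0 < j)%N -> 0 < a j)
  (psum_cvg : psum n @[n --> \oo] --> p) (eps_cvg0 : eps n @[n --> \oo] --> 0)
  (p_le_psum_eps : forall N, (0 < N)%N -> p - psum N <= eps N).

Lemma psum0 : psum 0 = 0.
Proof. by rewrite /psum big_geq. Qed.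

Lemma psumS N : psum N.+1 = psum N + a N.+1.
Proof. by rewrite /psum big_nat_recr. Qed.

Lemma psum_lt N : psum N < p.
Proof.
have psum_nd : nondecreasing_seq psum.
  by apply/nondecreasing_seqP => n; rewrite psumS lerDl ltW ?a_gt0.
have psum_le n : psum n <= p.
  have := nondecreasing_cvgn_le psum_nd (cvgP _ psum_cvg) n.
  by rewrite (cvg_lim _ psum_cvg).
by rewrite (lt_le_trans _ (psum_le N.+1)) // psumS ltrDl a_gt0.
Qed.

Lemma p_le_psum_err N : p <= psum N + err N.
Proof.
case: N => [|N]; last by rewrite -lerBlDl p_le_psum_eps.
by rewrite psum0 add0r ltW //; case/andP: p01.
Qed.

Lemma errE N : (0 < N)%N -> err N = eps N.
Proof. by case: N. Qed.

Definition inner_exit A k N : bool :=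
  [|| psum N + err N <= A + dyad k, A + dyad k < psum N |
      (A + dyad k / 2%:R < psum N) && (psum N + err N <= A + 3%:R / 2%:R * dyad k)].

Definition digit A k N : nat :=
  if psum N + err N <= A + dyad k then 0 else if A + dyad k < psum N then 2 else 1.

Definition inner_state N A s k := AlgState N (psum N) (err N) A s k true.

Definition outer_state N A s k := AlgState N (psum N) (err N) A s k false.

Lemma alg_step_outer c N A s k : alg_step a eps c (outer_state N A s k) =
  inl (inner_state N (A + s%:R * dyad k.+1) s k.+1).
Proof. by []. Qed.

Lemma alg_step_inner c N A s k : alg_step a eps c (inner_state N A s k) =
  if inner_exit A k N then
    if c k then inl (outer_state N A (digit A k N) k)
    else inr (output (digit A k N) (c k.+1))
  else inl (inner_state N.+1 A s k).
Proof.
rewrite /= -/(inner_exit A k N); case: ifP => // _.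
by rewrite /inner_state psumS.
Qed.

Lemma inner_exit_near A k : \forall N \near \oo, inner_exit A k N.
Proof.
have h_gt0 : 0 < dyad k :> R := dyad_gt0 _ k.
(* According as [p] is below, above or at [A + h], condition (i), (ii) or (iii)
   eventually holds. *)
case: (ltgtP p (A + dyad k)) => p_cmp; near=> N;
  (rewrite /inner_exit errE; last by near: N; exact: nbhs_infty_gt);
  have := psum_lt N.
- have : eps N < A + dyad k - p.
    by near: N; apply: (cvgr_lt _ eps_cvg0); rewrite subr_gt0.
  by move=> eps_small psum_lt_p; apply/orP; left; lra.
- have : A + dyad k < psum N by near: N; exact: cvgr_gt psum_cvg _ p_cmp.
  by move=> -> _; rewrite orbT.
- have : A + dyad k / 2%:R < psum N by near: N; apply: cvgr_gt psum_cvg _ _; lra.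
  have : eps N < dyad k / 2%:R by near: N; apply: (cvgr_lt _ eps_cvg0); lra.
  by move=> eps_small psum_big psum_lt_p; rewrite psum_big /=; apply/orP; right; lra.
Unshelve. all: by end_near.
Qed.

Lemma exists_inner_exit A k N0 : exists N, (N0 <= N)%N && inner_exit A k N.
Proof.
have [M _ exitM] := inner_exit_near A k.
by exists (maxn N0 M); rewrite leq_maxl exitM //= leq_maxr.
Qed.

Definition exit_index N0 A k := ex_minn (exists_inner_exit A k N0).

Lemma exit_indexP N0 A k : [/\ (N0 <= exit_index N0 A k)%N,
  inner_exit A k (exit_index N0 A k) &
  forall N, (N0 <= N < exit_index N0 A k)%N -> ~~ inner_exit A k N].
Proof.
rewrite /exit_index; case: ex_minnP => M /andP[N0M exitM] M_min; split=> // N.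
by case/andP=> N0N NM; apply: contraTN NM => exitN; rewrite -leqNgt M_min ?N0N.
Qed.

Lemma run_inner_steps c A s k N0 m :
  (forall N, (N0 <= N < N0 + m)%N -> ~~ inner_exit A k N) ->
  run_steps a eps c m (inner_state N0 A s k) = Some (inner_state (N0 + m) A s k).
Proof.
elim: m N0 => [|m IH] N0 no_exit; first by rewrite addn0.
rewrite run_stepsS alg_step_inner ifN ?no_exit ?leqnn ?addnS ?ltnS ?leq_addr //.
rewrite -addSn IH // => N /andP[N0N NM]; apply: no_exit.
by rewrite (ltnW N0N) -addSnnS.
Qed.

Lemma run_inner_loop c A s k N0 : exists m,
  run_steps a eps c m (inner_state N0 A s k) =
  Some (inner_state (exit_index N0 A k) A s k).
Proof.
have [N0_le _ no_exit] := exit_indexP N0 A k.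
by exists (exit_index N0 A k - N0)%N; rewrite run_inner_steps subnKC.
Qed.

(* The state in which outer iteration [K] ends, provided [X_1 = ... = X_K = 1]. *)
Fixpoint outer K : alg_state R :=
  if K is K'.+1 then
    let x := outer K' in
    let A := stA x + (sts x)%:R * dyad K in
    let N := exit_index (stN x) A K in
    outer_state N A (digit A K N) K
  else outer_state 0 0 0 0.

Lemma outerAS K :
  stA (outer K.+1) = stA (outer K) + (sts (outer K))%:R * dyad K.+1.
Proof. by []. Qed.

Lemma outer0 : outer 0 = alg_init R.
Proof. by rewrite /= /outer_state psum0. Qed.

Lemma outerE K :
  outer K = outer_state (stN (outer K)) (stA (outer K)) (sts (outer K)) K.
Proof. by case: K. Qed.

Lemma inner_exit_outer K : inner_exit (stA (outer K.+1)) K.+1 (stN (outer K.+1)).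
Proof. by have [] := exit_indexP (stN (outer K)) (stA (outer K.+1)) K.+1. Qed.

Lemma run_outer_to_exit c K : exists m, run_steps a eps c m (outer K) =
  Some (inner_state (stN (outer K.+1)) (stA (outer K.+1)) (sts (outer K)) K.+1).
Proof.
have [m inner] :=
  run_inner_loop c (stA (outer K.+1)) (sts (outer K)) K.+1 (stN (outer K)).
by exists m.+1; rewrite [outer K in LHS]outerE run_stepsS alg_step_outer.
Qed.

Lemma reach_outer (c : nat -> bool) K : (forall i, (0 < i <= K)%N -> c i) ->
  exists2 m, (K <= m)%N & run_steps a eps c m (alg_init R) = Some (outer K).
Proof.
elim: K => [|K IH] heads; first by exists 0%N; rewrite // outer0.
have [|m Km reachK] := IH.
  by move=> i /andP[i_gt0 iK]; apply: heads; rewrite i_gt0 ltnW.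
have [m' to_exit] := run_outer_to_exit c K.
exists (m + (m' + 1))%N; first by rewrite addnA addn1 ltnS (leq_trans Km) ?leq_addr.
rewrite (run_stepsD _ reachK) (run_stepsD _ to_exit) run_stepsS.
by rewrite alg_step_inner inner_exit_outer heads ?leqnn.
Qed.

Lemma run_exit (c : nat -> bool) K :
  (forall i, (0 < i <= K)%N -> c i) -> c K.+1 = false ->
  exists n, alg_run a eps c n = Some (output (sts (outer K.+1)) (c K.+2)).
Proof.
move=> heads tail; have [m _ reachK] := reach_outer heads.
have [m' to_exit] := run_outer_to_exit c K.
exists (m + m' + 1)%N.
rewrite /alg_run (alg_run_from_steps 1 (etrans (run_stepsD m' reachK) to_exit)).
by rewrite alg_run_fromS alg_step_inner inner_exit_outer tail.
Qed.

Lemma heads_or_first_tail (c : nat -> bool) n :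
  (forall i, (0 < i <= n)%N -> c i) \/
  exists K, (forall i, (0 < i <= K)%N -> c i) /\ c K.+1 = false.
Proof.
elim: n => [|n [heads|]]; [by left; case | | by right].
case tail: (c n.+1); last by right; exists n.
left=> i /andP[i_gt0]; rewrite leq_eqVlt => /orP[/eqP -> //|].
by rewrite ltnS => iK; apply: heads; rewrite i_gt0.
Qed.

Lemma alg_run_someP c b : (exists n, alg_run a eps c n = Some b) <->
  exists K, [/\ forall i, (0 < i <= K)%N -> c i, c K.+1 = false &
                b = output (sts (outer K.+1)) (c K.+2)].
Proof.
split=> [[n run_n]|[K [heads tail ->]]]; last exact: run_exit.
have [heads|[K [heads tail]]] := heads_or_first_tail c n.
  have [m nm reach_n] := reach_outer heads.
  by rewrite /alg_run (alg_run_from_steps_None reach_n nm) in run_n.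
have [n' run_n'] := run_exit heads tail.
by exists K; split=> //; exact: alg_run_from_uniq run_n run_n'.
Qed.

Lemma alg_run_terminatesP c : (exists n, alg_run a eps c n != None) <->
  exists K, (forall i, (0 < i <= K)%N -> c i) /\ c K.+1 = false.
Proof.
split=> [[n]|[K [heads tail]]].
  case run_n: alg_run => [b|] // _.
  by have [|K [heads tail _]] := (alg_run_someP c b).1; [exists n | exists K].
by have [n run_n] := run_exit heads tail; exists n; rewrite run_n.
Qed.

Lemma digit_le2 A k N : (digit A k N <= 2)%N.
Proof. by rewrite /digit; case: ifP => //; case: ifP. Qed.

Lemma digit_bounds A k N : A < p <= A + 2%:R * dyad k -> inner_exit A k N ->
  let A' := A + (digit A k N)%:R * dyad k.+1 in A' < p <= A' + 2%:R * dyad k.+1.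
Proof.
move=> /andP[A_lt_p p_le] exitN.
have := psum_lt N; have := p_le_psum_err N; have := dyad_gt0 R k.
move: exitN; rewrite dyadS /inner_exit /digit.
case: ifP => [? _|_]; first by move=> *; apply/andP; split; lra.
case: ifP => [? _|_ /= /andP[? ?]] *; by apply/andP; split; lra.
Qed.

Lemma outer_bounds K : stA (outer K.+1) < p <= stA (outer K.+1) + 2%:R * dyad K.+1.
Proof.
elim: K => [|K IH]; last exact: digit_bounds IH (inner_exit_outer K).
rewrite /= mul0r !add0r /dyad expr1 divff ?pnatr_eq0 //.
by case/andP: p01 => -> /ltW.
Qed.

Lemma outerA_cvg : stA (outer n.+1) @[n --> \oo] --> p.
Proof.
have lower_cvg : p - dyad n @[n --> \oo] --> p.
  by rewrite -[X in _ --> X]subr0; apply: cvgB; [exact: cvg_cst | exact: dyad_cvg0].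
apply: (squeeze_cvgr _ lower_cvg (cvg_cst p)); near=> n.
have := outer_bounds n; rewrite dyadS => /andP[? ?].
by apply/andP; split; lra.
Unshelve. all: by end_near.
Qed.

Section Coins.
Context (d : measure_display) (T : measurableType d) (P : probability T R)
  (X : nat -> T -> bool).
Hypotheses (X_fair : fair_bernoulli P X) (X_indep : mutually_independent P X).

Definition output_one K : set T :=
  if sts (outer K.+1) == 0%N then set0
  else if sts (outer K.+1) == 2%N then first_tail X K
  else first_tail_then_head X K.

Lemma output_oneP K w :
  output_one K w <-> first_tail X K w /\ output (sts (outer K.+1)) (X K.+2 w).
Proof.
rewrite /output_one /output; have : (sts (outer K.+1) <= 2)%N := digit_le2 _ _ _.
case: (sts (outer K.+1)) => [|[|[|]]] //= _.
- by split=> // -[].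
- by rewrite first_tail_then_headP.
- by split=> // -[].
Qed.

Lemma measurable_output_one K : measurable (output_one K).
Proof.
rewrite /output_one; case: ifP => _; first exact: measurable0.
case: ifP => _; first exact: measurable_first_tail X_fair K.
exact: measurable_first_tail_then_head X_fair K.
Qed.

Lemma prob_output_one K :
  P (output_one K) = (stA (outer K.+2) - stA (outer K.+1))%:E.
Proof.
rewrite outerAS addrAC subrr add0r /output_one.
have : (sts (outer K.+1) <= 2)%N := digit_le2 _ _ _.
case: (sts (outer K.+1)) => [|[|[|]]] //= _.
- by rewrite measure0 mul0r.
- by rewrite prob_first_tail_then_head // mul1r.
- by rewrite prob_first_tail // [dyad K.+2]dyadS mulrA divff ?mul1r ?pnatr_eq0.
Qed.

Lemma alg_terminatesE : alg_terminates a eps X = \bigcup_K first_tail X K.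
Proof.
apply/seteqP; split=> w /=.
  by move=> /alg_run_terminatesP[K heads_tail]; exists K => //; apply/first_tailP.
by case=> K _ /first_tailP heads_tail; apply/alg_run_terminatesP; exists K.
Qed.

Lemma alg_outputs_oneE : alg_outputs_one a eps X = \bigcup_K output_one K.
Proof.
apply/seteqP; split=> w /=.
  move=> /alg_run_someP[K [heads tail Y1]]; exists K => //.
  by apply/output_oneP; rewrite -Y1; split=> //; apply/first_tailP.
case=> K _ /output_oneP[/first_tailP[heads tail] Y1].
by apply/alg_run_someP; exists K; rewrite Y1.
Qed.

Theorem prob_alg_terminates :
  measurable (alg_terminates a eps X) /\ P (alg_terminates a eps X) = 1%E.
Proof.
rewrite alg_terminatesE; split.
  by apply: bigcupT_measurable => K; exact: measurable_first_tail X_fair K.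
rewrite (measure_bigcup_telescope (v := fun n => - dyad n) (l := 0)).
- by rewrite sub0r opprK /dyad expr0 invr1.
- by move=> K; exact: measurable_first_tail X_fair K.
- exact: trivIset_first_tail.
- move=> n; apply: etrans (prob_first_tail X_fair X_indep n) _.
  by rewrite opprK dyadS; congr (_%:E); lra.
- by rewrite -oppr0; apply: cvgN; exact: dyad_cvg0.
Qed.

Theorem prob_alg_outputs_one :
  measurable (alg_outputs_one a eps X) /\ P (alg_outputs_one a eps X) = p%:E.
Proof.
rewrite alg_outputs_oneE; split.
  exact/bigcupT_measurable/measurable_output_one.
rewrite (measure_bigcup_telescope (v := fun n => stA (outer n.+1)) (l := p)).
- by rewrite outerAS /= mul0r !addr0 subr0.
- exact: measurable_output_one.
- move=> K n _ _ [w [/output_oneP[tailK _] /output_oneP[tailn _]]].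
  by apply: (trivIset_first_tail (X := X)) => //; exists w.
- exact: prob_output_one.
- exact: outerA_cvg.
Qed.

End Coins.

End Analysis.

Theorem theorem1 (R : realType) (p : R) (a : nat -> rat) (eps : nat -> R)
  (d : measure_display) (T : measurableType d) (P : probability T R)
  (X : nat -> T -> bool) :
  0 < p < 1 ->
  (forall j, (0 < j)%N -> 0 < a j) ->
  (\sum_(1 <= j < n.+1) (ratr (a j) : R)) @[n --> \oo] --> p ->
  (forall m n, (0 < m)%N -> (m <= n)%N -> eps n <= eps m) ->
  eps N @[N --> \oo] --> (0 : R) ->
  (forall N, (0 < N)%N -> p - \sum_(1 <= j < N.+1) (ratr (a j) : R) <= eps N) ->
  fair_bernoulli P X ->
  mutually_independent P X ->
  (* (1) termination with probability 1 *)
  (measurable (alg_terminates (fun j => ratr (a j)) eps X) /\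
   P (alg_terminates (fun j => ratr (a j)) eps X) = 1%E) /\
  (* (2) Pr[Y = 1] = p *)
  (measurable (alg_outputs_one (fun j => ratr (a j)) eps X) /\
   P (alg_outputs_one (fun j => ratr (a j)) eps X) = p%:E) /\
  (* (3) if all eps(N) are rational, the same algorithm run in rational
         arithmetic has exactly the same behaviour on every coin sequence *)
  (forall e : nat -> rat, (forall N, (0 < N)%N -> eps N = ratr (e N)) ->
     forall (c : nat -> bool) (fuel : nat),
       alg_run (fun j => ratr (a j) : R) eps c fuel = alg_run a e c fuel).
Proof.
move=> p01 a_gt0 psum_cvg _ eps_cvg0 p_le_psum_eps X_fair X_indep.
pose a' j : R := ratr (a j).
have a'_gt0 j : (0 < j)%N -> 0 < a' j by move=> j_gt0; rewrite ltr0q a_gt0.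
split; [|split].
- exact: (prob_alg_terminates (a := a') a'_gt0 psum_cvg eps_cvg0 X_fair X_indep).
- exact: (prob_alg_outputs_one (a := a') p01 a'_gt0 psum_cvg eps_cvg0 p_le_psum_eps
          X_fair X_indep).
- by move=> e eps_ratr c n; exact: alg_run_ratr.
Qed.
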